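(* Let $\Gamma=\langle x,y,z\mid xy^{-1}=zx^{-1},\ yz^{-1}=zy^{-1}\rangle$ with generating set $\Delta=\{x,y,z\}$. Then $W=W_xU_x+W_yU_y+W_zU_z$ is a homogeneous scalar quantum walk on $C_\Delta(\Gamma)$ if and only if, up to a global phase, $W_x=\cos\phi$, $W_y=\frac{1+i(-1)^q}{2}\sin\phi$, $W_z=-\frac{1-i(-1)^q}{2}\sin\phi$ for some real $\phi$ and some integer $q$ (with these values nonzero). In particular such a walk exists.
   Context: The Cayley graph $C_\Delta(\Gamma)$ has vertex set $\Gamma$ and directed edges $(g,g\delta)$, $g\in\Gamma,\delta\in\Delta$. Let $\ell^2(\Gamma)$ have orthonormal basis $\{|g\rangle\}_{g\in\Gamma}$ and for $\delta\in\Gamma$ let $U_\delta|g\rangle=|g\delta\rangle$. A homogeneous scalar quantum walk on $C_\Delta(\Gamma)$ is a unitary operator $W=\sum_{\delta\in\Delta}W_\delta U_\delta$ with all complex coefficients $W_\delta$ nonzero. ''Up to a global phase'' means that all coefficients may be multiplied by a common complex number of modulus one. *)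

From Stdlib Require Import Reals ZArith.
From Coquelicot Require Import Coquelicot.

Record Grp := {
  carrier :> Type;
  gmul : carrier -> carrier -> carrier;
  ginv : carrier -> carrier;
  gone : carrier;
  gmulA : forall a b c, gmul a (gmul b c) = gmul (gmul a b) c;
  gmul1 : forall a, gmul gone a = a;
  gmulV : forall a, gmul (ginv a) a = gone
}.

Definition is_hom (G H : Grp) (f : G -> H) : Prop :=
  forall a b : G, f (gmul G a b) = gmul H (f a) (f b).

Definition gamma_rel (H : Grp) (a b c : H) : Prop :=
  gmul H a (ginv H b) = gmul H c (ginv H a) /\
  gmul H b (ginv H c) = gmul H c (ginv H b).

(* (G; x, y, z) is the group presented by <x,y,z | xy^-1 = zx^-1, yz^-1 = zy^-1>,
   characterised by its universal property. *)
Definition is_Gamma (G : Grp) (x y z : G) : Prop :=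
  gamma_rel G x y z /\
  (forall (H : Grp) (a b c : H), gamma_rel H a b c ->
     exists f : G -> H, is_hom G H f /\ f x = a /\ f y = b /\ f z = c) /\
  (forall (H : Grp) (f g : G -> H), is_hom G H f -> is_hom G H g ->
     f x = g x -> f y = g y -> f z = g z -> forall t, f t = g t).

(* Vectors are complex functions on G; |h> is the indicator of h.
   U_d |h> = |h d>, i.e. (U_d psi)(g) = psi (g d^-1). *)
Definition shift (G : Grp) (d : G) (psi : G -> C) : G -> C :=
  fun g => psi (gmul G g (ginv G d)).

Definition walk (G : Grp) (x y z : G) (wx wy wz : C) (psi : G -> C) : G -> C :=
  fun g => (wx * shift G x psi g + wy * shift G y psi g + wz * shift G z psi g)%C.

(* Its Hilbert-space adjoint W^* = conj(W_x) U_x^{-1} + ..., using U_d^* = U_{d^-1}. *)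
Definition walk_adj (G : Grp) (x y z : G) (wx wy wz : C) (psi : G -> C) : G -> C :=
  fun g => (Cconj wx * shift G (ginv G x) psi g + Cconj wy * shift G (ginv G y) psi g
            + Cconj wz * shift G (ginv G z) psi g)%C.

Definition walk_unitary (G : Grp) (x y z : G) (wx wy wz : C) : Prop :=
  forall psi : G -> C,
    walk_adj G x y z wx wy wz (walk G x y z wx wy wz psi) = psi /\
    walk G x y z wx wy wz (walk_adj G x y z wx wy wz psi) = psi.

Definition hsqw (G : Grp) (x y z : G) (wx wy wz : C) : Prop :=
  walk_unitary G x y z wx wy wz /\ wx <> 0%C /\ wy <> 0%C /\ wz <> 0%C.

(** The three relations identify the nine products [a b^-1] (a, b in {x, y, z}) of [W^* W]
    with the identity and just three further elements, namely [x y^-1 = z x^-1],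
    [x z^-1 = y x^-1] and [y z^-1 = z y^-1], and likewise for the products [a^-1 b] of
    [W W^*].  Hence [W] is unitary as soon as the coefficients of these four elements are
    [1, 0, 0, 0].  Conversely these four elements are pairwise distinct, as witnessed by
    the homomorphism onto [Z/4] sending [x, y, z] to [0, -1, 1], so unitarity forces
    [|wx|^2 + |wy|^2 + |wz|^2 = 1], [conj wx wy + conj wz wx = 0] and
    [Re (conj wy wz) = 0].  After removing the phase of [wx], the second equation gives
    [wz = - conj wy], the third [Im wy = +- Re wy], and the first [wx^2 + 4 (Re wy)^2 = 1],
    which is the stated parametrisation with [sin phi = 2 Re wy]. *)

From Pilot Require Import Defs.
From Stdlib Require Import Reals ZArith.
From Coquelicot Require Import Coquelicot.
From Stdlib Require Import Lra Psatz FunctionalExtensionality.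

Section GroupFacts.
Variable G : Grp.
Notation "a * b" := (gmul G a b).
Notation "a ^-1" := (ginv G a) (at level 3, format "a ^-1").
Notation e := (gone G).

Lemma gmulVr (a : G) : a * a^-1 = e.
Proof.
  rewrite <- (gmul1 G (a * a^-1)), <- (gmulV G a^-1) at 1.
  rewrite <- gmulA, (gmulA G a^-1 a), gmulV, gmul1. apply gmulV.
Qed.

Lemma gmulr1 (a : G) : a * e = a.
Proof. rewrite <- (gmulV G a), gmulA, gmulVr. apply gmul1. Qed.

Lemma ginvK (a : G) : (a^-1)^-1 = a.
Proof. rewrite <- (gmulr1 (a^-1)^-1), <- (gmulV G a), gmulA, gmulV. apply gmul1. Qed.

Lemma ginv_unique (a b : G) : a * b = e -> a = b^-1.
Proof. intro H. rewrite <- (gmulr1 a), <- (gmulVr b), gmulA, H. apply gmul1. Qed.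

Lemma ginvM (a b : G) : (a * b)^-1 = b^-1 * a^-1.
Proof.
  symmetry; apply ginv_unique.
  rewrite <- !gmulA, (gmulA G a^-1 a), gmulV, gmul1. apply gmulV.
Qed.

Lemma gmul_idem_one (a : G) : a * a = a -> a = e.
Proof.
  intro H. transitivity (a^-1 * (a * a)).
  - rewrite gmulA, gmulV, gmul1. reflexivity.
  - rewrite H. apply gmulV.
Qed.

End GroupFacts.

Section Homomorphisms.
Variables G H : Grp.
Variable f : G -> H.
Hypothesis f_hom : is_hom G H f.

Lemma hom_one : f (gone G) = gone H.
Proof. apply gmul_idem_one. rewrite <- f_hom, gmul1. reflexivity. Qed.

Lemma hom_inv (a : G) : f (ginv G a) = ginv H (f a).
Proof. apply ginv_unique. rewrite <- f_hom, gmulV. apply hom_one. Qed.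

Lemma shift_comp_hom (d : G) (psi : H -> C) :
  Defs.shift G d (fun g => psi (f g)) = fun g => Defs.shift H (f d) psi (f g).
Proof.
  unfold Defs.shift. apply functional_extensionality; intro g.
  rewrite f_hom, hom_inv. reflexivity.
Qed.

Lemma walk_comp_hom (x y z : G) (wx wy wz : C) (psi : H -> C) :
  walk G x y z wx wy wz (fun g => psi (f g))
  = fun g => walk H (f x) (f y) (f z) wx wy wz psi (f g).
Proof. unfold walk. rewrite !shift_comp_hom. reflexivity. Qed.

Lemma walk_adj_comp_hom (x y z : G) (wx wy wz : C) (psi : H -> C) :
  walk_adj G x y z wx wy wz (fun g => psi (f g))
  = fun g => walk_adj H (f x) (f y) (f z) wx wy wz psi (f g).
Proof. unfold walk_adj. rewrite !shift_comp_hom, !hom_inv. reflexivity. Qed.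

End Homomorphisms.

Section GammaRelations.
Variable G : Grp.
Variables x y z : G.
Hypothesis rel : gamma_rel G x y z.
Notation "a * b" := (gmul G a b).
Notation "a ^-1" := (ginv G a) (at level 3, format "a ^-1").

Lemma gamma_yx_xz : y * x^-1 = x * z^-1.
Proof.
  destruct rel as [Hxy _]. apply (f_equal (ginv G)) in Hxy.
  rewrite !ginvM, !ginvK in Hxy. exact Hxy.
Qed.

Lemma gamma_z : z = x * y^-1 * x.
Proof. destruct rel as [Hxy _]. rewrite Hxy, <- gmulA, gmulV. symmetry; apply gmulr1. Qed.

Lemma gamma_xz_yx : x^-1 * z = y^-1 * x.
Proof. rewrite gamma_z, <- !gmulA, (gmulA G x^-1 x), gmulV. apply gmul1. Qed.

Lemma gamma_zx_xy : z^-1 * x = x^-1 * y.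
Proof.
  pose proof (f_equal (ginv G) gamma_xz_yx) as E.
  rewrite !ginvM, !ginvK in E. exact E.
Qed.

Lemma gamma_zy_yz : z^-1 * y = y^-1 * z.
Proof.
  destruct rel as [_ Hyz].
  rewrite <- (gmulr1 G z) at 2. rewrite <- (gmulV G y), (gmulA G z y^-1 y), <- Hyz.
  rewrite !gmulA, gmulV, gmul1. reflexivity.
Qed.

End GammaRelations.

Open Scope C_scope.

(* In [Gamma] the left-hand sides are the coefficients of [1], [x y^-1] and [y z^-1] in
   [W^* W]; the remaining coefficient, of [x z^-1], is the conjugate of that of [x y^-1]. *)
Definition unitarity_conditions (wx wy wz : C) : Prop :=
  Cconj wx * wx + Cconj wy * wy + Cconj wz * wz = 1 /\
  Cconj wx * wy + Cconj wz * wx = 0 /\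
  Cconj wy * wz + Cconj wz * wy = 0.

Section CollapsedSums.
Variables wx wy wz : C.
Hypothesis cond : unitarity_conditions wx wy wz.

Lemma unitarity_conditions_conj : Cconj wy * wx + Cconj wx * wz = 0.
Proof.
  destruct cond as [_ [H1 _]].
  transitivity (Cconj (Cconj wx * wy + Cconj wz * wx)).
  - rewrite Cplus_conj, !Cmult_conj, !Cconj_conj. ring.
  - rewrite H1. apply injective_projections; simpl; ring.
Qed.

Lemma adj_walk_sum (p0 p q s : C) :
  Cconj wx * (wx * p0 + wy * p + wz * q) + Cconj wy * (wx * q + wy * p0 + wz * s)
  + Cconj wz * (wx * p + wy * s + wz * p0) = p0.
Proof.
  destruct cond as [Hn [H1 H2]]. pose proof unitarity_conditions_conj as H1'.
  transitivity (p0 * (Cconj wx * wx + Cconj wy * wy + Cconj wz * wz)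
    + p * (Cconj wx * wy + Cconj wz * wx) + q * (Cconj wy * wx + Cconj wx * wz)
    + s * (Cconj wy * wz + Cconj wz * wy)); [ring|].
  rewrite Hn, H1, H1', H2. ring.
Qed.

Lemma walk_adj_sum (p0 p q s : C) :
  wx * (Cconj wx * p0 + Cconj wy * p + Cconj wz * q)
  + wy * (Cconj wx * q + Cconj wy * p0 + Cconj wz * s)
  + wz * (Cconj wx * p + Cconj wy * s + Cconj wz * p0) = p0.
Proof.
  destruct cond as [Hn [H1 H2]]. pose proof unitarity_conditions_conj as H1'.
  transitivity (p0 * (Cconj wx * wx + Cconj wy * wy + Cconj wz * wz)
    + q * (Cconj wx * wy + Cconj wz * wx) + p * (Cconj wy * wx + Cconj wx * wz)
    + s * (Cconj wy * wz + Cconj wz * wy)); [ring|].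
  rewrite Hn, H1, H1', H2. ring.
Qed.

End CollapsedSums.

Lemma walk_unitary_of_conditions (G : Grp) (x y z : G) (wx wy wz : C) :
  gamma_rel G x y z -> unitarity_conditions wx wy wz -> walk_unitary G x y z wx wy wz.
Proof.
  intros rel cond psi.
  split; apply functional_extensionality; intro g; unfold walk_adj, walk, Defs.shift;
    rewrite !ginvK, <- !gmulA.
  - pose proof rel as [Hxy Hyz].
    rewrite <- Hxy, <- Hyz, (gamma_yx_xz G x y z rel), !gmulVr, !gmulr1.
    apply adj_walk_sum, cond.
  - rewrite (gamma_xz_yx G x y z rel), (gamma_zx_xy G x y z rel),
      (gamma_zy_yz G x y z rel), !gmulV, !gmulr1.
    apply walk_adj_sum, cond.
Qed.

Inductive Z4 : Set := Z4_0 | Z4_1 | Z4_2 | Z4_3.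

Definition Z4_add (a b : Z4) : Z4 :=
  match a, b with
  | Z4_0, b | b, Z4_0 => b
  | Z4_1, Z4_1 | Z4_3, Z4_3 => Z4_2
  | Z4_1, Z4_2 | Z4_2, Z4_1 => Z4_3
  | Z4_1, Z4_3 | Z4_3, Z4_1 | Z4_2, Z4_2 => Z4_0
  | Z4_2, Z4_3 | Z4_3, Z4_2 => Z4_1
  end.

Definition Z4_opp (a : Z4) : Z4 :=
  match a with Z4_0 => Z4_0 | Z4_1 => Z4_3 | Z4_2 => Z4_2 | Z4_3 => Z4_1 end.

Definition Z4_group : Grp.
Proof.
  refine (@Build_Grp Z4 Z4_add Z4_opp Z4_0 _ _ _).
  - intros [] [] []; reflexivity.
  - intros []; reflexivity.
  - intros []; reflexivity.
Defined.

Lemma Z4_gamma_rel : gamma_rel Z4_group Z4_0 Z4_3 Z4_1.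
Proof. split; reflexivity. Qed.

Definition Z4_delta (k t : Z4) : C :=
  match k, t with
  | Z4_0, Z4_0 | Z4_1, Z4_1 | Z4_2, Z4_2 | Z4_3, Z4_3 => 1
  | _, _ => 0
  end.

Lemma conditions_of_Z4_walk (wx wy wz : C) :
  (forall k, walk_adj Z4_group Z4_0 Z4_3 Z4_1 wx wy wz
               (walk Z4_group Z4_0 Z4_3 Z4_1 wx wy wz (Z4_delta k)) Z4_0 = Z4_delta k Z4_0) ->
  unitarity_conditions wx wy wz.
Proof.
  intro H. pose proof (H Z4_0) as K0. pose proof (H Z4_1) as K1. pose proof (H Z4_2) as K2.
  unfold walk_adj, walk, Defs.shift in K0, K1, K2. simpl in K0, K1, K2.
  split; [|split]; [rewrite <- K0 | rewrite <- K1 | rewrite <- K2]; ring.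
Qed.

Lemma conditions_of_walk_unitary (G : Grp) (x y z : G) (wx wy wz : C) :
  is_Gamma G x y z -> walk_unitary G x y z wx wy wz -> unitarity_conditions wx wy wz.
Proof.
  intros [_ [univ _]] HU.
  destruct (univ Z4_group Z4_0 Z4_3 Z4_1 Z4_gamma_rel) as (f & f_hom & fx & fy & fz).
  apply conditions_of_Z4_walk. intro k.
  destruct (HU (fun g => Z4_delta k (f g))) as [E _].
  rewrite (walk_comp_hom G Z4_group f f_hom), (walk_adj_comp_hom G Z4_group f f_hom) in E.
  apply (f_equal (fun h => h (gone G))) in E.
  rewrite (hom_one G Z4_group f f_hom), fx, fy, fz in E. exact E.
Qed.

Definition coef_x (phi : R) : C := RtoC (cos phi).
Definition coef_y (phi : R) (q : Z) : C :=
  (1 + Ci * RtoC (powerRZ (-1) q)) / 2 * RtoC (sin phi).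
Definition coef_z (phi : R) (q : Z) : C :=
  - ((1 - Ci * RtoC (powerRZ (-1) q)) / 2) * RtoC (sin phi).

Lemma coef_y_eq (phi : R) (q : Z) :
  coef_y phi q = ((sin phi / 2)%R, (powerRZ (-1) q * sin phi / 2)%R).
Proof.
  apply injective_projections; unfold coef_y, Cdiv, Cinv, Cmult, Cplus, RtoC, Ci;
    simpl; field.
Qed.

Lemma coef_z_eq (phi : R) (q : Z) :
  coef_z phi q = ((- sin phi / 2)%R, (powerRZ (-1) q * sin phi / 2)%R).
Proof.
  apply injective_projections; unfold coef_z, Cdiv, Cinv, Cmult, Cplus, Cminus, Copp, RtoC, Ci;
    simpl; field.
Qed.

Lemma coefs_neq0 (phi : R) (q : Z) : cos phi <> 0%R -> sin phi <> 0%R ->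
  coef_x phi <> 0 /\ coef_y phi q <> 0 /\ coef_z phi q <> 0.
Proof.
  intros Hc Hs. rewrite coef_y_eq, coef_z_eq. unfold coef_x.
  repeat split; intro E; apply (f_equal fst) in E; simpl in E; lra.
Qed.

Lemma Cmult_unit_conj (lam : C) : Cmod lam = 1%R -> lam * Cconj lam = 1.
Proof. intro H. rewrite <- Cmod2_conj, H. apply injective_projections; simpl; ring. Qed.

Lemma Cconj_mult_unit (lam a b : C) : Cmod lam = 1%R ->
  Cconj (lam * a) * (lam * b) = Cconj a * b.
Proof.
  intro H. rewrite Cmult_conj.
  transitivity ((lam * Cconj lam) * (Cconj a * b)); [ring|].
  rewrite Cmult_unit_conj by exact H. ring.
Qed.

Lemma unitarity_conditions_scale (lam a b c : C) : Cmod lam = 1%R ->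
  unitarity_conditions (lam * a) (lam * b) (lam * c) <-> unitarity_conditions a b c.
Proof. intro H. unfold unitarity_conditions. rewrite !Cconj_mult_unit by exact H. reflexivity. Qed.

Lemma Cmod1_factor (lam w : C) : Cmod lam = 1%R -> exists u, w = lam * u.
Proof.
  intro H. exists (Cconj lam * w).
  transitivity ((lam * Cconj lam) * w); [rewrite Cmult_unit_conj by exact H|]; ring.
Qed.

Lemma Cpolar (w : C) : w <> 0 ->
  exists (lam : C) (r : R), Cmod lam = 1%R /\ (0 < r)%R /\ w = lam * r.
Proof.
  intro Hw. pose proof (proj1 (Cmod_gt_0 w) Hw) as Hr.
  assert (Hr0 : RtoC (Cmod w) <> 0) by (intro E; apply (f_equal fst) in E; simpl in E; lra).
  exists (w / Cmod w), (Cmod w). repeat split; [|exact Hr|field; exact Hr0].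
  rewrite Cmod_div by exact Hr0. rewrite Cmod_R, Rabs_pos_eq by lra. field. lra.
Qed.

Lemma Cmult_neq0_r (a b : C) : a * b <> 0 -> b <> 0.
Proof. intros H E. apply H. rewrite E. ring. Qed.

Close Scope C_scope.

Lemma unitarity_conditions_real_first (r : R) (u v : C) :
  0 < r -> unitarity_conditions r u v ->
  exists s t : R, (s = 1 \/ s = -1) /\ r * r + t * t = 1 /\
    u = (t / 2, s * t / 2) /\ v = (- t / 2, s * t / 2).
Proof.
  intros Hr [Hn [H1 H2]]. destruct u as [u1 u2], v as [v1 v2].
  apply (f_equal fst) in Hn, H2. pose proof (f_equal snd H1) as H1i. apply (f_equal fst) in H1.
  unfold Cconj, Cmult, Cplus, RtoC in Hn, H1, H1i, H2; simpl in Hn, H1, H1i, H2.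
  assert (Ev1 : v1 = - u1) by (apply (Rmult_eq_reg_l r); lra).
  assert (Ev2 : v2 = u2) by (apply (Rmult_eq_reg_l r); lra).
  subst v1 v2.
  assert (Hsq : (u2 - u1) * (u2 + u1) = 0) by lra.
  destruct (Rmult_integral _ _ Hsq) as [E|E]; [exists 1 | exists (-1)]; exists (2 * u1);
    (repeat split; [lra | lra | f_equal; lra ..]).
Qed.

Lemma unitarity_conditions_of_real (c t s : R) :
  c * c + t * t = 1 -> s * s = 1 ->
  unitarity_conditions c (t / 2, s * t / 2) (- t / 2, s * t / 2).
Proof.
  intros Hct Hs.
  repeat split; apply injective_projections; unfold Cconj, Cmult, Cplus, RtoC; simpl; nra.
Qed.

Lemma circle_cos_sin (c t : R) : 0 <= c -> c * c + t * t = 1 ->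
  exists phi, cos phi = c /\ sin phi = t.
Proof.
  intros Hc Hct.
  assert (Ht : -1 <= t <= 1) by nra.
  exists (asin t). split; [|exact (sin_asin t Ht)].
  rewrite cos_asin by exact Ht. replace (1 - t²) with (c * c) by (unfold Rsqr; lra).
  apply sqrt_square, Hc.
Qed.

Lemma powerRZ_m1_sqr (q : Z) : powerRZ (-1) q * powerRZ (-1) q = 1.
Proof. rewrite <- powerRZ_mult. replace (-1 * -1) with 1 by ring. apply powerRZ_R1. Qed.

Lemma powerRZ_m1_cases (s : R) : s = 1 \/ s = -1 -> exists q, powerRZ (-1) q = s.
Proof. intros [-> | ->]; [exists 0%Z | exists 1%Z]; simpl; ring. Qed.

Open Scope C_scope.

Lemma coefs_of_unitarity_conditions (wx wy wz : C) :
  wx <> 0 -> unitarity_conditions wx wy wz ->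
  exists (lam : C) (phi : R) (q : Z), Cmod lam = 1%R /\
    wx = lam * coef_x phi /\ wy = lam * coef_y phi q /\ wz = lam * coef_z phi q.
Proof.
  intros Hx cond.
  destruct (Cpolar wx Hx) as (lam & r & Hlam & Hr & ->).
  destruct (Cmod1_factor lam wy Hlam) as [u ->].
  destruct (Cmod1_factor lam wz Hlam) as [v ->].
  apply unitarity_conditions_scale in cond; [|exact Hlam].
  destruct (unitarity_conditions_real_first r u v Hr cond) as (s & t & Hs & Hrt & -> & ->).
  destruct (circle_cos_sin r t) as (phi & Hc & Hsn); [lra | exact Hrt |].
  destruct (powerRZ_m1_cases s Hs) as [q Hq].
  exists lam, phi, q. rewrite coef_y_eq, coef_z_eq. unfold coef_x.
  rewrite Hc, Hsn, Hq. auto.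
Qed.

Lemma unitarity_conditions_of_coefs (lam : C) (phi : R) (q : Z) : Cmod lam = 1%R ->
  unitarity_conditions (lam * coef_x phi) (lam * coef_y phi q) (lam * coef_z phi q).
Proof.
  intro Hlam. apply unitarity_conditions_scale; [exact Hlam|].
  rewrite coef_y_eq, coef_z_eq. apply unitarity_conditions_of_real; [|apply powerRZ_m1_sqr].
  pose proof (sin2_cos2 phi) as E. unfold Rsqr in E. lra.
Qed.

Lemma hsqw_iff_coefs (G : Grp) (x y z : G) (wx wy wz : C) : is_Gamma G x y z ->
  hsqw G x y z wx wy wz <->
  exists (lam : C) (phi : R) (q : Z), Cmod lam = 1%R /\
    wx = lam * coef_x phi /\ wy = lam * coef_y phi q /\ wz = lam * coef_z phi q /\
    coef_x phi <> 0 /\ coef_y phi q <> 0 /\ coef_z phi q <> 0.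
Proof.
  intro HG. split.
  - intros [HU [Hx [Hy Hz]]].
    pose proof (conditions_of_walk_unitary G x y z wx wy wz HG HU) as cond.
    destruct (coefs_of_unitarity_conditions wx wy wz Hx cond)
      as (lam & phi & q & Hlam & Ex & Ey & Ez).
    exists lam, phi, q. subst.
    repeat split; [exact Hlam | eapply Cmult_neq0_r; eassumption ..].
  - intros (lam & phi & q & Hlam & -> & -> & -> & Nx & Ny & Nz).
    assert (Nlam : lam <> 0) by (intro E; rewrite E, Cmod_0 in Hlam; lra).
    split; [|repeat split; apply Cmult_neq_0; assumption].
    apply walk_unitary_of_conditions; [apply HG | apply unitarity_conditions_of_coefs, Hlam].
Qed.

Theorem mainTheorem5 (G : Grp) (x y z : G) (HG : is_Gamma G x y z) :
  (forall wx wy wz : C,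
     hsqw G x y z wx wy wz <->
     exists (lam : C) (phi : R) (q : Z),
       Cmod lam = 1%R /\
       let s := RtoC (powerRZ (-1) q) in
       let ax := RtoC (cos phi) in
       let ay := ((1 + Ci * s) / 2 * RtoC (sin phi))%C in
       let az := (- ((1 - Ci * s) / 2) * RtoC (sin phi))%C in
       wx = (lam * ax)%C /\ wy = (lam * ay)%C /\ wz = (lam * az)%C /\
       ax <> 0%C /\ ay <> 0%C /\ az <> 0%C) /\
  (exists wx wy wz : C, hsqw G x y z wx wy wz).
Proof.
  split; [intros wx wy wz; exact (hsqw_iff_coefs G x y z wx wy wz HG)|].
  exists (coef_x (PI / 4)), (coef_y (PI / 4) 0), (coef_z (PI / 4) 0).
  apply hsqw_iff_coefs; [exact HG|].
  assert (Hsqrt2 : (0 < 1 / sqrt 2)%R) by (apply Rdiv_lt_0_compat, sqrt_lt_R0; lra).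
  destruct (coefs_neq0 (PI / 4) 0) as (Nx & Ny & Nz);
    [rewrite cos_PI4; lra | rewrite sin_PI4; lra |].
  exists 1, (PI / 4)%R, 0%Z.
  repeat split; try assumption; [apply Cmod_1 | symmetry; apply Cmult_1_l ..].
Qed.
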